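(* With the notation of the context, suppose there are two sample points $\bm x_\alpha,\bm x_\beta$ such that $$\max_{j\in J_{\leq,\alpha}}u_j(\bm x_\beta)<u^*(\bm x_\beta)=u_\beta(\bm x_\beta).$$ Then there exists a point $\bm x_\gamma\in\mathcal{L}(\bm x_\alpha,\bm x_\beta)=\{\lambda\bm x_\alpha+(1-\lambda)\bm x_\beta:\lambda\in(0,1)\}$ and an affine local piece $u_\gamma$ of $u^*$ with $u^*(\bm x_\gamma)=u_\gamma(\bm x_\gamma)$ such that $$u_\gamma(\bm x_\alpha)\le u_\alpha(\bm x_\alpha),\qquad u_\gamma(\bm x_\beta)\ge u_\beta(\bm x_\beta).$$ Moreover, after adding $(\bm x_\gamma,u_\gamma)$ to the sample set (and recomputing $J_{\leq,\alpha}$ accordingly), $\max_{j\in J_{\leq,\alpha}}u_j(\bm x_\beta)\ge u_\beta(\bm x_\beta)$.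
   Context: Let $\Omega\subseteq\mathbb{R}^{n_x}$ be a convex polyhedron and $u^*:\Omega\to\mathbb{R}$ a continuous piecewise affine (PWA) function: $\Omega$ is the union of finitely many closed convex polyhedra (local regions) with pairwise disjoint interiors, and on each local region $u^*$ coincides with an affine function (its local piece). Sample points $\bm x_1,\dots,\bm x_{N_s}\in\Omega$ are given, each lying in the interior of a unique order (UO) region $\Gamma(\bm x_i)$ (a closed polyhedron inside a local region on whose interior the order of all distinct local pieces of $u^*$ is constant), and $u_i$ denotes the local piece of $u^*$ on $\Gamma(\bm x_i)$, so $u_i(\bm x_i)=u^*(\bm x_i)$. Define $J_{\leq,i}=\{j: u_j(\bm x_i)\le u_i(\bm x_i)\}$, where $j$ ranges over the indices of all current sample points. *)

From HB Require Import structures.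
From mathcomp Require Import all_boot all_order all_algebra.
From mathcomp Require Import all_classical all_reals all_analysis.
Set Implicit Arguments. Unset Strict Implicit. Unset Printing Implicit Defensive.
Import Order.TTheory GRing.Theory Num.Theory.
Import numFieldTopology.Exports numFieldNormedType.Exports.
Local Open Scope classical_set_scope.
Local Open Scope ring_scope.

Section Defs.
Variables (R : realType) (n : nat).
Notation vec := 'rV[R]_n.

Definition affine (f : vec -> R) : Prop :=
  exists (a : 'cV[R]_n) (b : R), forall x, f x = (x *m a) 0 0 + b.

Definition polyhedron (P : set vec) : Prop :=
  exists (m : nat) (A : 'M[R]_(n, m)) (b : 'rV[R]_m),
    P = [set x | forall j : 'I_m, (x *m A) 0 j <= b 0 j].

Definition cont_pwa (Omega : set vec) (ustar : vec -> R) (K : nat)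
    (reg : 'I_K -> set vec) (piece : 'I_K -> vec -> R) : Prop :=
  [/\ polyhedron Omega,
      {within Omega, continuous ustar},
      (forall k, polyhedron (reg k)),
      Omega = \bigcup_(k in setT) reg k &
      [/\ (forall k l, k != l -> interior (reg k) `&` interior (reg l) = set0),
           (forall k, affine (piece k)) &
           (forall k x, reg k x -> ustar x = piece k x)]].

Definition uo_region (K : nat) (reg : 'I_K -> set vec)
    (piece : 'I_K -> vec -> R) (G : set vec) (k : 'I_K) : Prop :=
  [/\ polyhedron G, G `<=` reg k &
      forall p q : 'I_K,
        (forall x, interior G x -> piece p x < piece q x) \/
        (forall x, interior G x -> piece p x = piece q x) \/
        (forall x, interior G x -> piece q x < piece p x)].

Definition Jle (M : nat) (xs : 'I_M -> vec) (us : 'I_M -> vec -> R)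
    (a : 'I_M) : set 'I_M :=
  [set j | us j (xs a) <= us a (xs a)].

Definition extend (T : Type) (M : nat) (f : 'I_M -> T) (t : T) :
    'I_M.+1 -> T :=
  fun j => if unlift ord_max j is Some j' then f j' else t.

Definition open_seg (xa xb : vec) : set vec :=
  [set y | exists2 l : R, 0 < l < 1 & y = l *: xa + (1 - l) *: xb].

End Defs.

(* Compare u* with its chord along the segment: with line t running from
   x_beta (t = 0) to x_alpha (t = 1), let
     h(t) = u*(line t) - (t u*(x_alpha) + (1 - t) u*(x_beta)).
   Then h(0) = 0, and just before t = 1 the point line t lies in
   Gamma(x_alpha), where u* = u_alpha, so u_alpha(x_beta) < u*(x_beta) makes h
   negative there.  The local regions cut the segment into finitely many
   closed sets, so h passes from >= 0 to < 0 between two points s < t of a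
   single region, on which u* is an affine piece u_gamma.  Restricted to that
   region h is affine and decreasing, hence negative at t = 1 and nonnegative
   at t = 0: u_gamma(x_alpha) < u*(x_alpha) and u_gamma(x_beta) >= u*(x_beta).
   The first inequality puts the new sample itself into J_{<=,alpha}. *)

From HB Require Import structures.
From mathcomp Require Import all_boot all_order all_algebra.
From mathcomp Require Import all_classical all_reals all_analysis.
From mathcomp Require Import ring lra.
Set Implicit Arguments.
Unset Strict Implicit.
Unset Printing Implicit Defensive.
Import Order.TTheory GRing.Theory Num.Theory.
Import numFieldTopology.Exports numFieldNormedType.Exports.
Local Open Scope classical_set_scope.
Local Open Scope ring_scope.

Lemma near_closed_cover (T : topologicalType) (K : finType) (I : K -> set T)
    (x : T) :
  (forall k, closed (I k)) -> \forall y \near x, forall k, I k y -> I k x.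
Proof.
move=> closedI; apply: filter_forall => k.
have [Ikx|nIkx] := pselect (I k x); first exact: nearW.
have : nbhs x (~` I k) by apply: open_nbhs_nbhs; split; rewrite ?openC.
by apply: filterS => y nIky /nIky.
Qed.

Lemma sign_change_in_closed_cover (R : realType) (K : finType)
    (I : K -> set R) (h : R -> R) (a b : R) :
  (forall k, closed (I k)) -> (forall t, a <= t <= b -> exists k, I k t) ->
  a <= b -> 0 <= h a -> h b < 0 ->
  exists k s t, [/\ a <= s < t, t <= b, I k s /\ I k t & 0 <= h s /\ h t < 0].
Proof.
move=> closedI cover ab ha hb.
pose Z := [set t | a <= t <= b /\ 0 <= h t].
have Za : Z a by split; rewrite ?lexx.
have ubZ : ubound Z b by move=> t [/andP[]].
have Z_le_sup t : Z t -> t <= sup Z by apply: sup_ubound; exists b.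
have Zsup : closure Z (sup Z) by apply: closure_sup; [exists a|exists b].
have a_sup : a <= sup Z by exact: Z_le_sup.
have sup_b : sup Z <= b by apply: ge_sup; [exists a|].
(* Near [sup Z] every point shares a region with [sup Z]; the sign change
   happens between [sup Z] and such a point, on one side or the other. *)
have near_sup := @near_closed_cover _ _ I (sup Z) closedI.
have [hsup|hsup] := leP 0 (h (sup Z)).
- have sup_b' : sup Z < b.
    rewrite lt_neqAle sup_b andbT.
    by apply: contraTneq hsup => ->; rewrite -ltNge.
  have : closure [set t | sup Z < t] (sup Z) by rewrite closure_gt /=.
  move=> /(_ _ (filterI near_sup (lt_nbhsl sup_b'))) [t [/= sup_t [covt tb]]].
  have [|k Ikt] := cover t; first by apply/andP; split; lra.
  have ht : h t < 0.
    rewrite ltNge; apply/negP => ht; suff : t <= sup Z by rewrite leNgt sup_t.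
    by apply: Z_le_sup; split=> //; apply/andP; split; lra.
  exists k, (sup Z), t; split; rewrite ?a_sup ?sup_t ?(ltW tb) //.
  by split; [exact: covt|].
- have [s [[/andP[a_s sb] hs] covs]] := Zsup _ near_sup.
  have [|k Iks] := cover s; first by apply/andP.
  exists k, s, (sup Z); split; rewrite ?sup_b //; [|by split => //; exact: covs].
  rewrite a_s lt_neqAle Z_le_sup ?andbT; last by split; rewrite ?a_s.
  by apply: contraTneq hs => ->; rewrite -ltNge.
Qed.

Lemma chord_sign_change (R : realFieldType) (A B s t : R) :
  0 <= s -> s < t -> t <= 1 ->
  0 <= s * A + (1 - s) * B -> t * A + (1 - t) * B < 0 -> A < 0 /\ 0 <= B.
Proof. by move=> s0 st t1 hs ht; split; nra. Qed.

Section line.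
Variables (R : realType) (n : nat).
Implicit Types (xa xb : 'rV[R]_n) (t : R).

Definition line xa xb t : 'rV[R]_n := t *: xa + (1 - t) *: xb.

Lemma line0 xa xb : line xa xb 0 = xb.
Proof. by rewrite /line scale0r add0r subr0 scale1r. Qed.

Lemma affine_line (f : 'rV[R]_n -> R) xa xb t :
  affine f -> f (line xa xb t) = t * f xa + (1 - t) * f xb.
Proof.
by move=> [a [b fE]]; rewrite !fE /line mulmxDl -!scalemxAl !mxE; ring.
Qed.

Lemma line_mulmx m (A : 'M[R]_(n, m)) xa xb t j :
  (line xa xb t *m A) 0 j = t * (xa *m A) 0 j + (1 - t) * (xb *m A) 0 j.
Proof. by rewrite /line mulmxDl -!scalemxAl !mxE. Qed.

Lemma polyhedron_line_convex (P : set 'rV[R]_n) xa xb t :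
  polyhedron P -> P xa -> P xb -> 0 <= t <= 1 -> P (line xa xb t).
Proof.
move=> [m [A [b ->]]] /= Pa Pb /andP[t0 t1] j; rewrite line_mulmx.
have t1' : 0 <= 1 - t by lra.
have := ler_wpM2l t0 (Pa j); have := ler_wpM2l t1' (Pb j); lra.
Qed.

Lemma polyhedron_line_closed (P : set 'rV[R]_n) xa xb :
  polyhedron P -> closed [set t | P (line xa xb t)].
Proof.
move=> [m [A [b ->]]].
have -> : [set t | forall j, (line xa xb t *m A) 0 j <= b 0 j] =
    \bigcap_(j in setT) ((fun t => t * (xa *m A) 0 j + (1 - t) * (xb *m A) 0 j)
                          @^-1` [set y | y <= b 0 j]).
  by apply/seteqP; split => t Ht j /=; rewrite ?line_mulmx;
    [move=> _; rewrite -line_mulmx|]; exact: Ht.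
apply: closed_bigI => j _; apply: preimage_closed; last exact: closed_le.
by move=> t _; apply: cvgD; apply: cvgMl => //; apply: cvgB; [exact: cvg_cst|].
Qed.

Lemma line1 xa xb : line xa xb 1 = xa.
Proof. by rewrite /line subrr scale0r addr0 scale1r. Qed.

Lemma line_continuous xa xb : continuous (line xa xb).
Proof.
have lineE t : line xa xb t = xb + t *: (xa - xb).
  by rewrite /line scalerBl scale1r scalerBr addrCA.
move=> t; rewrite (funext lineE); apply: cvgD; first exact: cvg_cst.
by apply: cvgZr_tmp.
Qed.

Lemma interior_line_left (G : set 'rV[R]_n) xa xb :
  interior G xa -> exists2 d, 0 <= d < 1 & G (line xa xb d).
Proof.
move=> Gxa; have : nbhs (1 : R) (line xa xb @^-1` G).
  by apply: line_continuous; rewrite line1.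
move=> /nbhs_ballP[e /= e0 eG].
have me : Num.min e 1 <= e by rewrite ge_min lexx.
have m1 : Num.min e 1 <= 1 by rewrite ge_min lexx orbT.
have m0 : 0 < Num.min e 1 by rewrite lt_min e0 ltr01.
exists (1 - Num.min e 1 / 2); first by apply/andP; split; lra.
by apply: eG; rewrite -ball_normE /= opprB addrC subrK ger0_norm; lra.
Qed.
End line.

Lemma cont_pwa_line_crossing (R : realType) (n : nat) (Omega : set 'rV[R]_n)
    (ustar : 'rV[R]_n -> R) (K : nat) (reg : 'I_K -> set 'rV[R]_n)
    (piece : 'I_K -> 'rV[R]_n -> R) (xa xb : 'rV[R]_n) (d : R) :
  cont_pwa Omega ustar reg piece -> Omega xa -> Omega xb -> 0 <= d <= 1 ->
  ustar (line xa xb d) < d * ustar xa + (1 - d) * ustar xb ->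
  exists k t, [/\ 0 < t <= d, reg k (line xa xb t),
                  piece k xa < ustar xa & ustar xb <= piece k xb].
Proof.
move=> [convex_dom _ reg_poly OmegaE [_ piece_aff ustarE]] Oa Ob /andP[d0 d1].
move=> below_chord.
pose h t := ustar (line xa xb t) - (t * ustar xa + (1 - t) * ustar xb).
have hE k t : reg k (line xa xb t) ->
    h t = t * (piece k xa - ustar xa) + (1 - t) * (piece k xb - ustar xb).
  move=> Rkt; rewrite /h (ustarE k _ Rkt).
  by rewrite (affine_line _ _ _ (piece_aff k)); ring.
have closed_reg k : closed [set t | reg k (line xa xb t)].
  exact: polyhedron_line_closed (reg_poly k).
have cover t : 0 <= t <= d -> exists k, reg k (line xa xb t).
  move=> /andP[t0 td].
  have : Omega (line xa xb t).
    by apply: polyhedron_line_convex convex_dom Oa Ob _; rewrite t0 (le_trans td).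
  by rewrite OmegaE => -[k _ Rkt]; exists k.
have h0 : 0 <= h 0 by rewrite /h line0; lra.
have hd : h d < 0 by rewrite /h; lra.
have [k [s [t [/andP[s0 st] td [Rks Rkt] [hs ht]]]]] :=
  sign_change_in_closed_cover closed_reg cover d0 h0 hd.
rewrite (hE k) // in hs; rewrite (hE k) // in ht.
have [ka kb] := chord_sign_change s0 st (le_trans td d1) hs ht.
by exists k, t; split; rewrite ?td ?andbT //; lra.
Qed.

Theorem mainTheorem3 (R : realType) (n : nat) (Omega : set 'rV[R]_n)
  (ustar : 'rV[R]_n -> R) (K : nat) (reg : 'I_K -> set 'rV[R]_n)
  (piece : 'I_K -> 'rV[R]_n -> R)
  (N : nat) (xs : 'I_N -> 'rV[R]_n) (Gam : 'I_N -> set 'rV[R]_n)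
  (kidx : 'I_N -> 'I_K) (alpha beta : 'I_N) :
  cont_pwa Omega ustar reg piece ->
  (forall i, uo_region reg piece (Gam i) (kidx i)) ->
  (forall i, interior (Gam i) (xs i)) ->
  let us := fun i => piece (kidx i) in
  (forall j, Jle xs us alpha j -> us j (xs beta) < ustar (xs beta)) ->
  exists (xg : 'rV[R]_n) (kg : 'I_K),
    [/\ open_seg (xs alpha) (xs beta) xg,
        reg kg xg,
        ustar xg = piece kg xg,
        piece kg (xs alpha) <= us alpha (xs alpha) &
        piece kg (xs beta) >= us beta (xs beta)] /\
        exists2 j, Jle (extend xs xg) (extend us (piece kg)) (lift ord_max alpha) j
          & extend us (piece kg) j (xs beta) >= us beta (xs beta).
Proof.
move=> pwa uo xs_int us below; have [_ _ _ OmegaE [_ piece_aff ustarE]] := pwa.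
have Gam_reg i : Gam i `<=` reg (kidx i) by have [] := uo i.
have ustar_xs i : ustar (xs i) = us i (xs i).
  by apply: ustarE; apply: Gam_reg; apply: interior_subset.
have dom_xs i : Omega (xs i).
  by rewrite OmegaE; exists (kidx i) => //; apply: Gam_reg; apply: interior_subset.
have [d /andP[d0 d1] Gd] := interior_line_left (xs beta) (xs_int alpha).
have below_line : ustar (line (xs alpha) (xs beta) d) <
    d * ustar (xs alpha) + (1 - d) * ustar (xs beta).
  have ab := below alpha (lexx _).
  have : (1 - d) * us alpha (xs beta) < (1 - d) * ustar (xs beta).
    by rewrite ltr_pM2l ?subr_gt0.
  rewrite (ustarE _ _ (Gam_reg _ _ Gd)) (affine_line _ _ _ (piece_aff _)).
  by rewrite -[piece _ _](ustar_xs alpha) /us; lra.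
have d01 : 0 <= d <= 1 by rewrite d0 ltW.
have [k [t [/andP[t0 td] Rkt ka kb]]] :=
  cont_pwa_line_crossing pwa (dom_xs alpha) (dom_xs beta) d01 below_line.
have ka' : piece k (xs alpha) <= us alpha (xs alpha) by rewrite -ustar_xs ltW.
have kb' : us beta (xs beta) <= piece k (xs beta) by rewrite -ustar_xs.
exists (line (xs alpha) (xs beta) t), k; split.
  split => //; [exists t; rewrite ?t0 ?(le_lt_trans td d1) //|exact: ustarE].
by exists ord_max; rewrite /Jle /extend /= ?liftK unlift_none.
Qed.
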